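(* Let $\lambda\geqslant\omega$ be a cardinal and $n$ a positive integer, and let $\mathscr{I}_\lambda^n$ carry any Hausdorff topology making it a topological semigroup. Then the Bohr compactification $B(\mathscr{I}_\lambda^n)$ of $\mathscr{I}_\lambda^n$ is a trivial (one-element) semigroup.
   Context: A topological semigroup is a Hausdorff space with a continuous associative multiplication. For a set $X$ of cardinality $\lambda$, $\mathscr{I}(X)$ is the semigroup of all partial one-to-one maps of $X$ (including the empty map) under composition; the rank of $\alpha$ is $|\operatorname{ran}\alpha|$, and $\mathscr{I}_\lambda^n=\{\alpha\in\mathscr{I}(X):\operatorname{rank}\alpha\leqslant n\}$. A Bohr compactification of a topological semigroup $S$ is a pair $(\beta,B(S))$ where $B(S)$ is a compact topological semigroup and $\beta\colon S\to B(S)$ is a continuous homomorphism such that for every continuous homomorphism $g\colon S\to T$ into a compact topological semigroup $T$ there is a unique continuous homomorphism $f\colon B(S)\to T$ with $g=\beta f$ (maps written on the right, so $(s)g=((s)\beta)f$). *)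

From Stdlib Require Import List Arith.
Import ListNotations.

Definition is_topology {T : Type} (open : (T -> Prop) -> Prop) : Prop :=
  open (fun _ => True) /\
  (forall U V, open U -> open V -> open (fun x => U x /\ V x)) /\
  (forall F : (T -> Prop) -> Prop, (forall U, F U -> open U) ->
     open (fun x => exists U, F U /\ U x)).

Definition hausdorff {T : Type} (open : (T -> Prop) -> Prop) : Prop :=
  forall x y : T, x <> y ->
    exists U V, open U /\ open V /\ U x /\ V y /\ (forall z, U z -> V z -> False).

Definition compact {T : Type} (open : (T -> Prop) -> Prop) : Prop :=
  forall F : (T -> Prop) -> Prop,
    (forall U, F U -> open U) ->
    (forall x, exists U, F U /\ U x) ->
    exists l : list (T -> Prop),
      (forall U, In U l -> F U) /\ (forall x, exists U, In U l /\ U x).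

Definition continuous {A B : Type} (openA : (A -> Prop) -> Prop)
  (openB : (B -> Prop) -> Prop) (f : A -> B) : Prop :=
  forall V, openB V -> openA (fun x => V (f x)).

(* Continuity of m : T x T -> T w.r.t. the product topology (written out
   via the basic open rectangles U x V). *)
Definition jointly_continuous {T : Type} (open : (T -> Prop) -> Prop)
  (m : T -> T -> T) : Prop :=
  forall x y W, open W -> W (m x y) ->
    exists U V, open U /\ open V /\ U x /\ V y /\
      (forall a b, U a -> V b -> W (m a b)).

Definition associative {S : Type} (m : S -> S -> S) : Prop :=
  forall a b c, m a (m b c) = m (m a b) c.

Definition is_topsemigroup {S : Type} (m : S -> S -> S)
  (open : (S -> Prop) -> Prop) : Prop :=
  is_topology open /\ hausdorff open /\ associative m /\
  jointly_continuous open m.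

Definition is_hom {S T : Type} (mS : S -> S -> S) (mT : T -> T -> T)
  (f : S -> T) : Prop :=
  forall a b, f (mS a b) = mT (f a) (f b).

Definition is_bohr_compactification
  {S : Type} (mS : S -> S -> S) (openS : (S -> Prop) -> Prop)
  {B : Type} (mB : B -> B -> B) (openB : (B -> Prop) -> Prop)
  (beta : S -> B) : Prop :=
  is_topsemigroup mB openB /\ compact openB /\
  continuous openS openB beta /\ is_hom mS mB beta /\
  forall (T : Type) (mT : T -> T -> T) (openT : (T -> Prop) -> Prop),
    is_topsemigroup mT openT -> compact openT ->
    forall g : S -> T, continuous openS openT g -> is_hom mS mT g ->
      exists! f : B -> T,
        continuous openB openT f /\ is_hom mB mT f /\
        forall s, g s = f (beta s).

(* partial maps X -> X as X -> option X *)
Definition pinjective {X : Type} (f : X -> option X) : Prop :=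
  forall x1 x2 y, f x1 = Some y -> f x2 = Some y -> x1 = x2.

Definition rank_le {X : Type} (n : nat) (f : X -> option X) : Prop :=
  exists l : list X, length l <= n /\ forall x y, f x = Some y -> In y l.

Definition I_n (X : Type) (n : nat) : Type :=
  { f : X -> option X | pinjective f /\ rank_le n f }.

(* composition with maps written on the right: x (a b) = (x a) b *)
Definition pcomp {X : Type} (f g : X -> option X) : X -> option X :=
  fun x => match f x with Some y => g y | None => None end.

Lemma pcomp_ok {X : Type} (n : nat) (f g : X -> option X) :
  pinjective f -> pinjective g -> rank_le n g ->
  pinjective (pcomp f g) /\ rank_le n (pcomp f g).
Proof.
  intros Hf Hg [l [Hl Hr]]; unfold pcomp; split.
  - intros x1 x2 y H1 H2.
    destruct (f x1) as [y1|] eqn:E1; [|discriminate].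
    destruct (f x2) as [y2|] eqn:E2; [|discriminate].
    assert (y1 = y2) by (eapply Hg; eauto). subst. eapply Hf; eauto.
  - exists l; split; [exact Hl|]. intros x y H.
    destruct (f x) as [z|]; [eapply Hr; eauto | discriminate].
Qed.

Definition I_mul {X : Type} {n : nat} (a b : I_n X n) : I_n X n :=
  exist _ (pcomp (proj1_sig a) (proj1_sig b))
    (pcomp_ok n _ _ (proj1 (proj2_sig a)) (proj1 (proj2_sig b))
                    (proj2 (proj2_sig b))).

(* X is infinite, i.e. |X| = lambda >= omega *)
Definition infinite_type (X : Type) : Prop :=
  forall l : list X, exists x, ~ In x l.

(* For s in I_n with range inside a list L of at most n points, let phi_i map L
   injectively onto a block of fresh points, the blocks being pairwise disjoint,
   and let psi_i be the inverse of phi_i.  Then s phi_i psi_i = s and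
   s phi_i psi_j = 0 for i <> j.  In a compact Hausdorff topological semigroup a
   family with a_i b_i = p and a_i b_j = q (i <> j) forces p = q: otherwise every
   point of T x T has a neighbourhood U x V containing (a_i, b_i) for at most one
   index i, and compactness of T x T would leave only finitely many indices.
   Hence every homomorphism from I_n into a compact semigroup is constant, and
   the universal property of the Bohr compactification then identifies the
   identity of B(I_n) with a constant map. *)
From Stdlib Require Import List Arith Lia Cantor Classical ClassicalEpsilon
  FunctionalExtensionality PropExtensionality ProofIrrelevance.
Import ListNotations.

Definition finitely_many (P : nat -> Prop) : Prop :=
  exists L : list nat, forall i, P i -> In i L.

Lemma not_finitely_many_all : ~ finitely_many (fun _ => True).
Proof.
  intros [L HL].
  assert (Hmax : forall k, In k L -> k <= list_max L)
    by (apply Forall_forall, list_max_le, le_n).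
  specialize (Hmax _ (HL (S (list_max L)) I)); lia.
Qed.

Lemma finitely_many_sub (P Q : nat -> Prop) :
  (forall i, P i -> Q i) -> finitely_many Q -> finitely_many P.
Proof. intros HPQ [L HL]; exists L; auto. Qed.

Lemma finitely_many_subsingleton (P : nat -> Prop) :
  (forall i j, P i -> P j -> i = j) -> finitely_many P.
Proof.
  intros HP. destruct (classic (exists i, P i)) as [[i0 Hi0] | Hnone].
  - exists [i0]; intros i Hi; left; exact (HP _ _ Hi0 Hi).
  - exists []; intros i Hi; exact (Hnone (ex_intro _ i Hi)).
Qed.

Lemma finitely_many_list_union {A : Type} (l : list A) (P : A -> nat -> Prop) :
  (forall a, In a l -> finitely_many (P a)) ->
  finitely_many (fun i => exists a, In a l /\ P a i).
Proof.
  induction l as [| a l IH]; intros Hl.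
  - exists []; intros i [? [[] _]].
  - destruct (Hl a (or_introl eq_refl)) as [La HLa].
    destruct IH as [Lb HLb]; [intros; apply Hl; right; assumption |].
    exists (La ++ Lb); intros i [a' [[<- | Ha'] Hi]]; apply in_or_app; eauto.
Qed.

Section CompactSpace.

Variables (T : Type) (open : (T -> Prop) -> Prop).
Hypothesis Htop : is_topology open.
Hypothesis Hcpt : compact open.

Lemma open_nbhd_list {A : Type} (l : list A) (x : T) (R : A -> (T -> Prop) -> Prop) :
  (forall a U U', R a U -> (forall z, U' z -> U z) -> R a U') ->
  (forall a, In a l -> exists U, open U /\ U x /\ R a U) ->
  exists U, open U /\ U x /\ forall a, In a l -> R a U.
Proof.
  destruct Htop as [Htrue [Hinter _]]; intros Hanti.
  induction l as [| a l IH]; intros Hl.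
  - exists (fun _ => True); repeat split; [exact Htrue | intros _ []].
  - destruct IH as [U [HU [Ux HUl]]]; [intros; apply Hl; right; assumption |].
    destruct (Hl a (or_introl eq_refl)) as [U' [HU' [U'x HU'a]]].
    exists (fun z => U z /\ U' z); repeat split; auto.
    intros a' [<- | Ha']; eapply Hanti; eauto; intros z []; assumption.
Qed.

Lemma compact_not_locally_finite (a : nat -> T) :
  ~ (forall x, exists U, open U /\ U x /\ finitely_many (fun i => U (a i))).
Proof.
  intros Hloc.
  destruct (Hcpt (fun U => open U /\ finitely_many (fun i => U (a i))))
    as [l [Hl Hcov]]; [intros U []; assumption | |].
  - intros x; destruct (Hloc x) as [U [? [? ?]]]; eauto.
  - apply not_finitely_many_all.
    apply (finitely_many_sub _ (fun i => exists U, In U l /\ U (a i)));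
      [intros i _; apply Hcov |].
    apply finitely_many_list_union; intros U HU; apply Hl, HU.
Qed.

(* The tube lemma, phrased for index sets of a pair of sequences. *)
Lemma locally_finite_of_pairs (a b : nat -> T) :
  (forall x y, exists U V, open U /\ open V /\ U x /\ V y /\
     finitely_many (fun i => U (a i) /\ V (b i))) ->
  forall x, exists U, open U /\ U x /\ finitely_many (fun i => U (a i)).
Proof.
  intros Hloc x.
  destruct (Hcpt (fun V => open V /\ exists U, open U /\ U x /\
                      finitely_many (fun i => U (a i) /\ V (b i))))
    as [l [Hl Hcov]]; [intros V []; assumption | |].
  - intros y; destruct (Hloc x y) as [U [V [? [? [? [? ?]]]]]].
    exists V; eauto 7.
  - destruct (open_nbhd_list l x (fun V U => finitely_many (fun i => U (a i) /\ V (b i))))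
      as [U [HU [Ux HUl]]].
    + intros V U U' HUV HU'U; revert HUV; apply finitely_many_sub.
      intros i [Ha Hb]; split; [apply HU'U |]; assumption.
    + intros V HV; apply Hl, HV.
    + exists U; repeat split; [exact HU | exact Ux |].
      apply (finitely_many_sub _ (fun i => exists V, In V l /\ U (a i) /\ V (b i))).
      * intros i Hi; destruct (Hcov (b i)) as [V [? ?]]; eauto.
      * apply finitely_many_list_union, HUl.
Qed.

End CompactSpace.

Lemma hausdorff_avoid {T : Type} (open : (T -> Prop) -> Prop) (p q : T) :
  hausdorff open -> p <> q ->
  forall z, exists W, open W /\ W z /\ (~ W p \/ ~ W q).
Proof.
  intros Hh Hpq z.
  destruct (classic (z = p)) as [-> | Hzp].
  - destruct (Hh p q Hpq) as [W [W' [HW [_ [Wp [W'q Hdisj]]]]]].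
    exists W; repeat split; auto; right; intros Wq; exact (Hdisj q Wq W'q).
  - destruct (Hh z p Hzp) as [W [W' [HW [_ [Wz [W'p Hdisj]]]]]].
    exists W; repeat split; auto; left; intros Wp; exact (Hdisj p Wp W'p).
Qed.

Lemma compact_semigroup_biorthogonal_eq {T : Type} (m : T -> T -> T)
  (open : (T -> Prop) -> Prop) (a b : nat -> T) (p q : T) :
  is_topsemigroup m open -> compact open ->
  (forall i, m (a i) (b i) = p) ->
  (forall i j, i <> j -> m (a i) (b j) = q) ->
  p = q.
Proof.
  intros [Htop [Hh [_ Hcont]]] Hcpt Hdiag Hoff.
  apply NNPP; intros Hpq.
  apply (compact_not_locally_finite T open Hcpt a).
  apply (locally_finite_of_pairs T open Htop Hcpt a b).
  intros x y.
  destruct (hausdorff_avoid open p q Hh Hpq (m x y)) as [W [HW [Wxy Hmiss]]].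
  destruct (Hcont x y W HW Wxy) as [U [V [HU [HV [Ux [Vy HUV]]]]]].
  exists U, V; repeat split; auto.
  apply finitely_many_subsingleton; intros i j [Ui Vi] [Uj Vj].
  destruct Hmiss as [Np | Nq].
  - exfalso; apply Np; rewrite <- (Hdiag i); auto.
  - destruct (Nat.eq_dec i j) as [| Hij]; [assumption |].
    exfalso; apply Nq; rewrite <- (Hoff i j Hij); auto.
Qed.

Section InfiniteType.

Variable X : Type.

Fixpoint fresh_list (pick : list X -> X) (k : nat) : list X :=
  match k with
  | 0 => []
  | S k => pick (fresh_list pick k) :: fresh_list pick k
  end.

Lemma fresh_list_In (pick : list X -> X) j k :
  j < k -> In (pick (fresh_list pick j)) (fresh_list pick k).
Proof.
  induction k as [| k IH]; simpl; intros Hjk; [lia |].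
  destruct (Nat.eq_dec j k) as [-> | Hjk']; [left; reflexivity | right; apply IH; lia].
Qed.

Lemma infinite_type_injection :
  infinite_type X -> exists e : nat -> X, forall i j, e i = e j -> i = j.
Proof.
  intros Hinf.
  set (pick := fun l => proj1_sig (constructive_indefinite_description _ (Hinf l))).
  assert (Hpick : forall l, ~ In (pick l) l)
    by (intros l; exact (proj2_sig (constructive_indefinite_description _ (Hinf l)))).
  exists (fun k => pick (fresh_list pick k)); intros i j Heq.
  destruct (Nat.lt_total i j) as [Hij | [Hij | Hij]]; [exfalso | assumption | exfalso].
  - apply (Hpick (fresh_list pick j)); rewrite <- Heq; apply fresh_list_In, Hij.
  - apply (Hpick (fresh_list pick i)); rewrite Heq; apply fresh_list_In, Hij.
Qed.

End InfiniteType.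

Section PartialMaps.

Variable X : Type.

Fixpoint index_of (y : X) (l : list X) : nat :=
  match l with
  | [] => 0
  | z :: l => if excluded_middle_informative (z = y) then 0 else S (index_of y l)
  end.

Lemma index_of_inj (l : list X) y1 y2 :
  In y1 l -> In y2 l -> index_of y1 l = index_of y2 l -> y1 = y2.
Proof.
  induction l as [| z l IH]; simpl; [intros [] |].
  intros H1 H2.
  destruct (excluded_middle_informative (z = y1)) as [<- | N1],
           (excluded_middle_informative (z = y2)) as [<- | N2];
    try discriminate; intros E; [reflexivity |].
  destruct H1 as [-> | H1]; [contradiction |].
  destruct H2 as [-> | H2]; [contradiction |].
  apply IH; auto.
Qed.

(* The inverse of a partial injection; its value is unconstrained where
   [f] is not injective. *)
Definition pinv (f : X -> option X) (z : X) : option X :=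
  match excluded_middle_informative (exists x, f x = Some z) with
  | left H => Some (proj1_sig (constructive_indefinite_description _ H))
  | right _ => None
  end.

Lemma pinv_some f z x : pinv f z = Some x -> f x = Some z.
Proof.
  unfold pinv; destruct (excluded_middle_informative _) as [H | H]; [| discriminate].
  destruct (constructive_indefinite_description _ H) as [w Hw]; simpl; congruence.
Qed.

Lemma pinv_of_some f x z : pinjective f -> f x = Some z -> pinv f z = Some x.
Proof.
  intros Hf Hx; unfold pinv.
  destruct (excluded_middle_informative _) as [H | H]; [| exfalso; eauto].
  destruct (constructive_indefinite_description _ H) as [w Hw]; simpl; f_equal; eauto.
Qed.

Lemma pinv_none f z : (forall x, f x <> Some z) -> pinv f z = None.
Proof.
  intros Hz; destruct (pinv f z) as [x |] eqn:E; [| reflexivity].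
  exfalso; exact (Hz x (pinv_some f z x E)).
Qed.

Lemma pinv_pinjective f : pinjective (pinv f).
Proof. intros z1 z2 x H1 H2; apply pinv_some in H1, H2; congruence. Qed.

Lemma pinv_rank_le (n : nat) (L : list X) f :
  length L <= n -> (forall x y, f x = Some y -> In x L) -> rank_le n (pinv f).
Proof.
  intros HL Hdom; exists L; split; [exact HL |].
  intros z x Hx; eapply Hdom, pinv_some, Hx.
Qed.

Lemma pcomp_pinv_cancel f g x :
  pinjective g -> (forall x y, f x = Some y -> exists z, g y = Some z) ->
  pcomp (pcomp f g) (pinv g) x = f x.
Proof.
  intros Hg Hdef; unfold pcomp.
  destruct (f x) as [y |] eqn:Ey; [| reflexivity].
  destruct (Hdef x y Ey) as [z Hz]; rewrite Hz; apply pinv_of_some; assumption.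
Qed.

Lemma pcomp_pinv_disjoint f g h x :
  (forall y y' z, g y = Some z -> h y' = Some z -> False) ->
  pcomp (pcomp f g) (pinv h) x = None.
Proof.
  intros Hdisj; unfold pcomp.
  destruct (f x) as [y |]; [| reflexivity].
  destruct (g y) as [z |] eqn:Ez; [| reflexivity].
  apply pinv_none; intros y' Hy'; exact (Hdisj y y' z Ez Hy').
Qed.

End PartialMaps.

Lemma I_n_ext {X : Type} {n : nat} (a b : I_n X n) :
  (forall x, proj1_sig a x = proj1_sig b x) -> a = b.
Proof.
  destruct a as [a Ha], b as [b Hb]; simpl; intros H.
  assert (a = b) as <- by (apply functional_extensionality; exact H).
  f_equal; apply proof_irrelevance.
Qed.

Definition I_zero (X : Type) (n : nat) : I_n X n.
Proof.
  exists (fun _ => None); split.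
  - intros x1 x2 y H; discriminate.
  - exists []; split; [apply Nat.le_0_l | intros x y H; discriminate].
Defined.

Lemma to_nat_inj (u v : nat * nat) : to_nat u = to_nat v -> u = v.
Proof. intros E; rewrite <- (cancel_of_to u), <- (cancel_of_to v), E; reflexivity. Qed.

Section Blocks.

Variables (X : Type) (n : nat) (e : nat -> X) (L : list X).
Hypothesis He : forall i j, e i = e j -> i = j.
Hypothesis HL : length L <= n.

Definition block (i : nat) (y : X) : option X :=
  if excluded_middle_informative (In y L) then Some (e (to_nat (i, index_of X y L))) else None.

Lemma block_some i y z : block i y = Some z -> In y L /\ z = e (to_nat (i, index_of X y L)).
Proof.
  unfold block; destruct (excluded_middle_informative _); intros H; [| discriminate].
  injection H; auto.
Qed.

Lemma block_some_eq i j y y' z :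
  block i y = Some z -> block j y' = Some z -> i = j /\ y = y'.
Proof.
  intros H H'; apply block_some in H as [Hy ->]; apply block_some in H' as [Hy' E].
  apply He, to_nat_inj in E; injection E as -> Eidx.
  split; [reflexivity | apply (index_of_inj X L); auto].
Qed.

Lemma block_defined i y : In y L -> exists z, block i y = Some z.
Proof. unfold block; destruct (excluded_middle_informative _); [eauto | contradiction]. Qed.

Lemma block_pinjective i : pinjective (block i).
Proof. intros y y' z H H'; exact (proj2 (block_some_eq i i y y' z H H')). Qed.

Lemma block_rank_le i : rank_le n (block i).
Proof.
  exists (map (fun y => e (to_nat (i, index_of X y L))) L).
  rewrite length_map; split; [exact HL |].
  intros y z H; apply block_some in H as [Hy ->].
  exact (in_map (fun y => e (to_nat (i, index_of X y L))) L y Hy).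
Qed.

Lemma block_domain i y z : block i y = Some z -> In y L.
Proof. intros H; exact (proj1 (block_some i y z H)). Qed.

Definition Block (i : nat) : I_n X n :=
  exist _ (block i) (conj (block_pinjective i) (block_rank_le i)).

Definition Unblock (i : nat) : I_n X n :=
  exist _ (pinv X (block i))
    (conj (pinv_pinjective X (block i)) (pinv_rank_le X n L (block i) HL (block_domain i))).

Lemma I_mul_Block_Unblock (s : I_n X n) i :
  (forall x y, proj1_sig s x = Some y -> In y L) ->
  I_mul (I_mul s (Block i)) (Unblock i) = s.
Proof.
  intros Hs; apply I_n_ext; intros x; simpl.
  apply pcomp_pinv_cancel; [apply block_pinjective |].
  intros x' y Hy; apply block_defined, (Hs x'), Hy.
Qed.

Lemma I_mul_Block_Unblock_neq (s : I_n X n) i j :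
  i <> j -> I_mul (I_mul s (Block i)) (Unblock j) = I_zero X n.
Proof.
  intros Hij; apply I_n_ext; intros x; simpl.
  apply pcomp_pinv_disjoint; intros y y' z H H'.
  exact (Hij (proj1 (block_some_eq i j y y' z H H'))).
Qed.

End Blocks.

Lemma I_n_hom_compact_const (X : Type) (n : nat) (T : Type) (mT : T -> T -> T)
  (openT : (T -> Prop) -> Prop) (g : I_n X n -> T) :
  infinite_type X -> is_topsemigroup mT openT -> compact openT ->
  is_hom (@I_mul X n) mT g -> forall s, g s = g (I_zero X n).
Proof.
  intros Hinf HT Hcpt Hhom s.
  destruct (infinite_type_injection X Hinf) as [e He].
  destruct (proj2 (proj2_sig s)) as [L [HL Hs]].
  apply (compact_semigroup_biorthogonal_eq mT openT
           (fun i => g (I_mul s (Block X n e L He HL i)))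
           (fun i => g (Unblock X n e L HL i)) _ _ HT Hcpt).
  - intros i; rewrite <- Hhom, I_mul_Block_Unblock; [reflexivity | exact Hs].
  - intros i j Hij; rewrite <- Hhom, I_mul_Block_Unblock_neq; [reflexivity | exact Hij].
Qed.

Lemma continuous_const {A B : Type} (openA : (A -> Prop) -> Prop)
  (openB : (B -> Prop) -> Prop) (c : B) :
  is_topology openA -> continuous openA openB (fun _ => c).
Proof.
  intros [Htrue [_ Hunion]] V _.
  destruct (classic (V c)) as [Vc | Vc].
  - replace (fun _ : A => V c) with (fun _ : A => True); [exact Htrue |].
    apply functional_extensionality; intros; apply propositional_extensionality; tauto.
  - replace (fun _ : A => V c) with (fun x : A => exists U : A -> Prop, False /\ U x);
      [apply Hunion; intros _ [] |].
    apply functional_extensionality; intros; apply propositional_extensionality; firstorder.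
Qed.

Lemma bohr_trivial_of_const {S : Type} (mS : S -> S -> S) (openS : (S -> Prop) -> Prop)
  {B : Type} (mB : B -> B -> B) (openB : (B -> Prop) -> Prop) (beta : S -> B) (s0 : S) :
  is_bohr_compactification mS openS mB openB beta ->
  (forall s, beta s = beta s0) -> forall b1 b2 : B, b1 = b2.
Proof.
  intros [HtB [HcB [Hcont [Hhom Huniv]]]] Hconst b1 b2.
  destruct (Huniv B mB openB HtB HcB beta Hcont Hhom) as [f [_ Hf]].
  assert (Hid : f = fun b => b)
    by (apply Hf; split; [intros V HV; exact HV | split; [intros a b | intros s]; reflexivity]).
  assert (Hc : f = fun _ => beta s0).
  { apply Hf; split; [| split].
    - apply continuous_const, (proj1 HtB).
    - intros a b; cbv beta; rewrite <- Hhom; symmetry; apply Hconst.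
    - apply Hconst. }
  rewrite Hid in Hc.
  transitivity (beta s0); [| symmetry]; exact (equal_f Hc _).
Qed.

Theorem theorem10 :
  forall (X : Type) (n : nat),
    infinite_type X -> 1 <= n ->
    forall open : (I_n X n -> Prop) -> Prop,
      is_topsemigroup (@I_mul X n) open ->
      forall (B : Type) (mB : B -> B -> B) (openB : (B -> Prop) -> Prop)
             (beta : I_n X n -> B),
        is_bohr_compactification (@I_mul X n) open mB openB beta ->
        forall b1 b2 : B, b1 = b2.
Proof.
  intros X n Hinf _ open _ B mB openB beta Hbohr.
  apply (bohr_trivial_of_const _ _ _ _ beta (I_zero X n) Hbohr).
  destruct Hbohr as [HtB [HcB [_ [Hhom _]]]].
  exact (I_n_hom_compact_const X n B mB openB beta Hinf HtB HcB Hhom).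
Qed.
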